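(* Let $a\in\mathbb{C}$ and $b=0$, and suppose $\cdot_\lambda\cdot$ is a compatible left-symmetric conformal algebraic structure on $\mathcal{W}(a,0)=\mathbb{C}[\partial]L\oplus\mathbb{C}[\partial]W$ such that $\mathbb{C}[\partial]L$ is a left-symmetric conformal subalgebra. Let $c\in\mathbb{C}$ with $L_\lambda L=(\partial+\lambda+c)L$, and write $L_\lambda W=g_1L+g_2W$, $W_\lambda L=h_1L+h_2W$, $W_\lambda W=k_1L+k_2W$ with $g_i,h_i,k_i\in\mathbb{C}[\lambda,\partial]$. Assume $g_2(\lambda,\partial)=\partial+(a-1)\lambda+c$ and $h_2(\lambda,\partial)=\partial+\lambda+c$. Then one of the following holds: (C2) $h_1=g_1=k_1=k_2=0$; (C3) $a=1$ (so $g_2=\partial+c$), $h_1=g_1=k_1=0$, and $k_2$ is a nonzero constant.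
   Context: A conformal algebra is a $\mathbb{C}[\partial]$-module $R$ with a $\mathbb{C}$-bilinear map $R\times R\to R[\lambda]$, $(x,y)\mapsto x_\lambda y$, satisfying $(\partial x)_\lambda y=-\lambda\, x_\lambda y$ and $x_\lambda(\partial y)=(\partial+\lambda)\,x_\lambda y$. For $x,y\in R$, $y_{-\lambda-\partial}x$ means: write $y_\mu x=\sum_j \mu^j z_j$ and set $y_{-\lambda-\partial}x=\sum_j(-\lambda-\partial)^j z_j$. A left-symmetric conformal algebra is a conformal algebra with $(x_\lambda y)_{\lambda+\mu}z-x_\lambda(y_\mu z)=(y_\mu x)_{\lambda+\mu}z-y_\mu(x_\lambda z)$. A compatible left-symmetric conformal algebraic structure on a Lie conformal algebra $(R,[\cdot_\lambda\cdot])$ is a left-symmetric conformal product on the same $\mathbb{C}[\partial]$-module with $x_\lambda y-y_{-\lambda-\partial}x=[x_\lambda y]$ for all $x,y$. $\mathcal{W}(a,b)$ is the free $\mathbb{C}[\partial]$-module with basis $L,W$ and Lie conformal brackets $[L_\lambda L]=(\partial+2\lambda)L$, $[L_\lambda W]=(\partial+a\lambda+b)W$, $[W_\lambda W]=0$. ''$\mathbb{C}[\partial]L$ is a left-symmetric conformal subalgebra'' means $L_\lambda L\in(\mathbb{C}[\partial]L)[\lambda]$; in that case $L_\lambda L=(\partial+\lambda+c)L$ for some $c\in\mathbb{C}$. *)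

From HB Require Import structures.
From mathcomp Require Import all_boot all_order all_algebra.
From mathcomp Require Import mpoly.
From mathcomp Require Import complex.
From mathcomp Require Import reals.

Set Implicit Arguments.
Unset Strict Implicit.
Unset Printing Implicit Defensive.

Import Order.TTheory GRing.Theory Num.Theory.
Local Open Scope ring_scope.

(* An element  p L + q W  of R = C[d]L (+) C[d]W (or of R[lambda], R[mu],    *)
(* R[lambda,mu]) is represented by the pair (p, q) : P * P; elements of R    *)
(* are those pairs whose components only involve 'X_2.                       *)

Section Conformal.
Variable C : fieldType.

Definition P := {mpoly C[3]}.
Definition elt := (P * P)%type.

Definition lam : P := 'X_0.
Definition mu  : P := 'X_1.
Definition dd  : P := 'X_2.

Definition inD (f : {poly C}) : P := (map_poly (fun c : C => c%:MP) f).[dd].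

Definition inR (f g : {poly C}) : elt := (inD f, inD g).

Definition subst3 (t0 t1 t2 : P) (p : P) : P := p \mPo [tuple t0; t1; t2].

Definition in_lam_d (p : P) : Prop := subst3 lam 0 dd p = p.

(* A conformal-algebra product on the free C[d]-module with basis L, W is   *)
(* determined by the four values L_l L, L_l W, W_l L, W_l W in R[lambda];  *)
Record basis_prod := BasisProd { bLL : elt; bLW : elt; bWL : elt; bWW : elt }.

(* The sesquilinear extension: for u = uL L + uW W and v = vL L + vW W whose *)
(* coefficients are polynomials in partial (and possibly in scalar          *)
(* parameters lambda, mu), and nu a scalar parameter,                       *)
(*  u_nu v = sum_{M,N} uM(-nu) vN(d+nu) (M_nu N),                           *)
(* using (d x)_nu y = -nu x_nu y and x_nu (d y) = (d+nu) x_nu y.           *)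
Definition prod (B : basis_prod) (nu : P) (u v : elt) : elt :=
  let sU := subst3 lam mu (- nu) in
  let sV := subst3 lam mu (dd + nu) in
  let sB := subst3 nu mu dd in
  let cLL := sU u.1 * sV v.1 in
  let cLW := sU u.1 * sV v.2 in
  let cWL := sU u.2 * sV v.1 in
  let cWW := sU u.2 * sV v.2 in
  (cLL * sB (bLL B).1 + cLW * sB (bLW B).1 + cWL * sB (bWL B).1 + cWW * sB (bWW B).1,
   cLL * sB (bLL B).2 + cLW * sB (bLW B).2 + cWL * sB (bWL B).2 + cWW * sB (bWW B).2).

Definition eadd (u v : elt) : elt := (u.1 + v.1, u.2 + v.2).
Definition esub (u v : elt) : elt := (u.1 - v.1, u.2 - v.2).

Definition wf_basis_prod (B : basis_prod) : Prop :=
  in_lam_d (bLL B).1 /\ in_lam_d (bLL B).2 /\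
  in_lam_d (bLW B).1 /\ in_lam_d (bLW B).2 /\
  in_lam_d (bWL B).1 /\ in_lam_d (bWL B).2 /\
  in_lam_d (bWW B).1 /\ in_lam_d (bWW B).2.

Definition left_symmetric (B : basis_prod) : Prop :=
  forall x1 x2 y1 y2 z1 z2 : {poly C},
    let x := inR x1 x2 in let y := inR y1 y2 in let z := inR z1 z2 in
    esub (prod B (lam + mu) (prod B lam x y) z) (prod B lam x (prod B mu y z)) =
    esub (prod B (lam + mu) (prod B mu y x) z) (prod B mu y (prod B lam x z)).

Definition prod_opp (B : basis_prod) (y x : elt) : elt :=
  let s := subst3 lam (- lam - dd) dd in
  let w := prod B mu y x in (s w.1, s w.2).

Definition compatible (B Lie : basis_prod) : Prop :=
  forall x1 x2 y1 y2 : {poly C},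
    let x := inR x1 x2 in let y := inR y1 y2 in
    esub (prod B lam x y) (prod_opp B y x) = prod Lie lam x y.

(* The Lie conformal algebra W(a,b):                                        *)
(*  [L_l L] = (d + 2l) L, [L_l W] = (d + a l + b) W, [W_l W] = 0, and       *)
(*  [W_l L] = -[L_{-l-d} W] = ((a-1) d + a l - b) W (skew-symmetry).        *)
Definition W_ab (a b : C) : basis_prod :=
  BasisProd (dd + 2%:R * lam, 0)
            (0, dd + a%:MP * lam + b%:MP)
            (0, (a - 1)%:MP * dd + a%:MP * lam - b%:MP)
            (0, 0).

End Conformal.

From mathcomp Require Import all_boot all_order all_algebra.
From mathcomp Require Import mpoly.
From mathcomp Require Import complex.
From mathcomp Require Import reals.
From mathcomp Require Import ring.
Import Order.TTheory GRing.Theory Num.Theory.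
Local Open Scope ring_scope.
Set Implicit Arguments.
Unset Strict Implicit.
Unset Printing Implicit Defensive.

(* Compatibility with the bracket of W(a,0) gives g1(λ,∂) = h1(-λ-∂,∂) and makes
   k1, k2 invariant under λ ↦ -λ-∂.  Writing b = a-1, the W-component of the
   left-symmetry identity for (L,W,W), specialised at λ ↦ c-λ, μ ↦ -c-∂, becomes
     (b(c-λ)+c+∂) (k2(λ,∂) - k2(λ,∂+c-λ)) + b(c-λ) k2(c,∂) = 0.
   Hence b k2(c,∂) = 0 and k2 is invariant under the shift ∂ ↦ ∂+c-λ, which in
   characteristic 0 forces k2 to be a constant k with b k = 0.  Substituted back,
   the same identity reduces to g1(λ,∂)(∂+c) = 0, so g1 = h1 = 0, and the identity
   for (W,W,W) reduces to k1(-c-∂,∂+λ)(∂+λ+c) = 0, so k1 = 0. *)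

Lemma eq_rmorph_mpoly n (R : comNzRingType) (S : comNzRingType)
    (f g : {rmorphism {mpoly R[n]} -> S}) :
  (forall c, f c%:MP = g c%:MP) -> (forall i, f 'X_i = g 'X_i) -> f =1 g.
Proof.
move=> eqC eqX p; rewrite (mpolyE p) !rmorph_sum; apply: eq_bigr => m _.
rewrite -mul_mpolyC !rmorphM eqC mpolyXE_id !rmorph_prod; congr (_ * _).
by apply: eq_bigr => i _; rewrite !rmorphXn eqX.
Qed.

Section Substitution.
Variable C : fieldType.
Local Notation P := (P C).
Implicit Types (p q x y z : P) (s : 3.-tuple P).

Lemma comp_mpolyX0 x y z : 'X_0 \mPo [tuple x; y; z] = x.
Proof. by rewrite comp_mpolyXU. Qed.
Lemma comp_mpolyX1 x y z : 'X_1 \mPo [tuple x; y; z] = y.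
Proof. by rewrite comp_mpolyXU. Qed.
Lemma comp_mpolyX2 x y z : 'X_2 \mPo [tuple x; y; z] = z.
Proof. by rewrite comp_mpolyXU. Qed.

Lemma comp_mpoly_tuple3 p x y z s :
  (p \mPo [tuple x; y; z]) \mPo s = p \mPo [tuple x \mPo s; y \mPo s; z \mPo s].
Proof.
apply: (eq_rmorph_mpoly (f := comp_mpoly s \o comp_mpoly [tuple x; y; z])) => [c|i].
  by rewrite /= !comp_mpolyC.
by rewrite /= !comp_mpolyXU; case: i => [[|[|[|]]]].
Qed.

Lemma comp_mpolyM p q s : (p * q) \mPo s = (p \mPo s) * (q \mPo s).
Proof. exact: rmorphM. Qed.

Lemma mpoly_neq0_comp1 p s : p \mPo s = 1 -> p != 0.
Proof. by apply: contra_eqN => /eqP ->; rewrite comp_mpoly0 eq_sym oner_eq0. Qed.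

(* Locked so that [ring] and the substitution rewrites treat [ev_ld p x y] as an atom. *)
Fact ev_ld_key : unit. Proof. by []. Qed.
Definition ev_ld p x y : P := locked_with ev_ld_key (p \mPo [tuple x; 0; y]).

Lemma ev_ldE p x y : ev_ld p x y = p \mPo [tuple x; 0; y].
Proof. by rewrite /ev_ld unlock. Qed.

Lemma ev_ld_comp p x y s : ev_ld p x y \mPo s = ev_ld p (x \mPo s) (y \mPo s).
Proof. by rewrite !ev_ldE comp_mpoly_tuple3 comp_mpoly0. Qed.

Lemma ev_ldC (k : C) x y : ev_ld k%:MP x y = k%:MP.
Proof. by rewrite ev_ldE comp_mpolyC. Qed.

Lemma ev_ld0 x y : ev_ld 0 x y = 0.
Proof. by rewrite ev_ldE comp_mpoly0. Qed.

Lemma in_lam_d_comp p x y z : in_lam_d p -> p \mPo [tuple x; y; z] = ev_ld p x z.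
Proof.
rewrite /in_lam_d /subst3 ev_ldE => pE.
by rewrite -{1}pE comp_mpoly_tuple3 /lam /dd comp_mpolyX0 comp_mpolyX2 comp_mpoly0.
Qed.

Lemma in_lam_d_ev_ld p : in_lam_d p -> ev_ld p 'X_0 'X_2 = p.
Proof. by rewrite /in_lam_d /subst3 ev_ldE. Qed.

Lemma ev_ld00 p : ev_ld p 0 0 = (p.@[fun _ => 0])%:MP.
Proof.
pose f := (@mpolyC 3 C) \o meval (fun _ : 'I_3 => 0 : C).
rewrite ev_ldE; apply: (eq_rmorph_mpoly (f := comp_mpoly [tuple 0; 0; 0]) (g := f)) => [k|i].
  by rewrite /f /= comp_mpolyC mevalC.
by rewrite /f /= mevalXU comp_mpolyXU; case: i => [[|[|[|]]]].
Qed.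

Lemma ev_ld_congr p x y x' y' : x = x' -> y = y' -> ev_ld p x y = ev_ld p x' y'.
Proof. by move=> -> ->. Qed.

Lemma ev_ld_symmetric p :
  ev_ld p 'X_0 'X_2 = ev_ld p (- 'X_0 - 'X_2) 'X_2 ->
  forall x y, ev_ld p x y = ev_ld p (- x - y) y.
Proof.
move=> pE x y; move: (congr1 (comp_mpoly [tuple x; 0; y]) pE).
by rewrite !ev_ld_comp comp_mpolyB comp_mpolyN comp_mpolyX0 comp_mpolyX2.
Qed.

Lemma inD0 : inD 0 = 0 :> P.
Proof. by rewrite /inD map_poly0 horner0. Qed.

Lemma inD1 : inD 1 = 1 :> P.
Proof. by rewrite /inD map_polyC hornerC. Qed.

End Substitution.

Lemma eq_of_subr_eq (R : comNzRingType) (x y u v : R) : u = v -> x - y = u - v -> x = y.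
Proof. by move=> -> /eqP; rewrite subrr subr_eq0 => /eqP. Qed.

Lemma shift_invariant_polyC (R : idomainType) (t : R) (q : {poly R}) :
  [pchar R] =i pred0 -> t != 0 -> q \Po ('X + t%:P) = q -> q = (q`_0)%:P.
Proof.
move=> /pcharf0P charR0 t_neq0.
elim: (size q) {-2}q (leqnn (size q)) => [|n IHn] {}q size_q qE.
  exact/size1_polyC/(leq_trans size_q).
have q'E : q^`() \Po ('X + t%:P) = q^`().
  by have := deriv_comp q ('X + t%:P); rewrite qE derivD derivX derivC addr0 mulr1.
have size_q' : (size q^`() <= n)%N.
  have [->|q_neq0] := eqVneq q 0; first by rewrite deriv0 size_poly0.
  by rewrite -ltnS (leq_trans (lt_size_deriv q_neq0)).
have qlin : q = (q`_0)%:P + q`_1 *: 'X.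
  apply/polyP => -[|[|j]]; rewrite coefD coefC coefZ coefX ?mulr0 ?addr0 ?add0r ?mulr1 //.
  have /eqP := congr1 (fun r : {poly R} => r`_j.+1) (IHn _ size_q' q'E).
  by rewrite coef_deriv coefC -mulr_natr mulf_eq0 charR0 orbF => /eqP.
have /eqP := congr1 (fun r : {poly R} => r`_0) qE.
rewrite {1}qlin comp_polyD comp_polyC comp_polyZ comp_polyX coefD coefZ coefD coefX !coefC.
rewrite add0r addrC -subr_eq0 addrK mulf_eq0 (negbTE t_neq0) orbF => /eqP q1_eq0.
by rewrite {1}qlin q1_eq0 scale0r addr0.
Qed.

Section ShiftInvariance.
Variable C : fieldType.
Local Notation P := (P C).

Lemma muniX_widen (i : 'I_3) (j : 'I_2) :
  val i = val j -> muni ('X_i : P) = ('X_j)%:P.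
Proof.
move=> ij; rewrite /muni mmapX mmap1U /=; case: splitP => [k|k] /=; rewrite ij.
  by move=> jk; congr ('X__)%:P; apply: val_inj.
by rewrite ord1 addn0 => jE; move: (ltn_ord j); rewrite jE.
Qed.

Lemma muniX_max (i : 'I_3) : val i = 2 -> muni ('X_i : P) = 'X.
Proof.
move=> iE; rewrite /muni mmapX mmap1U /=; case: splitP => [k|k] //=.
by rewrite iE => kE; move: (ltn_ord k); rewrite -kE.
Qed.

Lemma muni_comp_d (p z : P) :
  muni (p \mPo [tuple 'X_0; 'X_1; z]) = muni p \Po muni z.
Proof.
pose f := @muni 2 C \o comp_mpoly [tuple 'X_0; 'X_1; z].
pose g := comp_poly (muni z) \o @muni 2 C.
apply: (eq_rmorph_mpoly (f := f) (g := g)) => [c|i]; rewrite /f /g /=.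
  by rewrite comp_mpolyC muniC comp_polyC.
rewrite comp_mpolyXU; case: i => [[|[|[|//]]] i_lt3] /=.
- by rewrite (muniX_widen (j := 0)) // comp_polyC.
- by rewrite (muniX_widen (j := 1)) // comp_polyC.
- by rewrite (muniX_max (i := Ordinal i_lt3)) // comp_polyX.
Qed.

Lemma muniK : cancel (@muni 2 C) (fun r => (map_poly (@mwiden 2 C) r).['X_2]).
Proof.
pose f := horner_eval ('X_2 : P) \o map_poly (@mwiden 2 C) \o @muni 2 C.
apply: (eq_rmorph_mpoly (f := f) (g := idfun)) => [c|i]; rewrite /f /=.
  by rewrite muniC map_polyC /horner_eval hornerC /= mwidenC.
case: i => [[|[|[|//]]] i_lt3].
- rewrite (muniX_widen (j := 0)) // map_polyC /horner_eval hornerC /= mwidenX mnmwiden1.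
  by congr 'X__; apply: val_inj.
- rewrite (muniX_widen (j := 1)) // map_polyC /horner_eval hornerC /= mwidenX mnmwiden1.
  by congr 'X__; apply: val_inj.
- by rewrite (muniX_max (i := Ordinal i_lt3)) // map_polyX /horner_eval hornerX.
Qed.

Lemma shift_invariant_indep_d (c : C) (p : P) : [pchar C] =i pred0 ->
  p \mPo [tuple 'X_0; 'X_1; 'X_2 + (c%:MP - 'X_0)] = p ->
  p \mPo [tuple 'X_0; 'X_1; 0] = p.
Proof.
move=> charC0 pE; apply: (can_inj muniK).
have charP0 : [pchar {mpoly C[2]}] =i pred0.
  apply/pcharf0P => n; rewrite -(rmorph_nat (@mpolyC 2 C)) mpolyC_eq0.
  exact: (pcharf0P _).1 charC0 n.
have t_neq0 : c%:MP - 'X_0 != 0 :> {mpoly C[2]}.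
  apply/eqP => /(congr1 (meval (fun _ => c - 1))).
  rewrite mevalB mevalC mevalXU meval0 opprB addrC subrK.
  exact/eqP/oner_neq0.
have shiftE : muni ('X_2 + (c%:MP - 'X_0) : P) = 'X + (c%:MP - 'X_0)%:P.
  rewrite muniD muniB polyCB; congr (_ + (_ - _)).
  - exact: muniX_max.
  - exact: muniC.
  - exact: muniX_widen.
have := muni_comp_d p ('X_2 + (c%:MP - 'X_0)).
rewrite pE shiftE => /esym /(shift_invariant_polyC charP0 t_neq0) pE0.
by rewrite muni_comp_d muni0 pE0 comp_polyC.
Qed.

End ShiftInvariance.

(* Instances of generic ring lemmas at the type [P C]: autorewrite matches these
   much faster than the generic statements. *)
Section UnitSimpl.
Variable C : fieldType.
Implicit Types (x : P C) (s : 3.-tuple (P C)).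

Lemma comp_mpoly0P s : (0 : P C) \mPo s = 0. Proof. exact: comp_mpoly0. Qed.
Lemma comp_mpoly1P s : (1 : P C) \mPo s = 1. Proof. exact: comp_mpoly1. Qed.
Lemma mul0P x : 0 * x = 0. Proof. exact: mul0r. Qed.
Lemma mulP0 x : x * 0 = 0. Proof. exact: mulr0. Qed.
Lemma mul1P x : 1 * x = x. Proof. exact: mul1r. Qed.
Lemma mulP1 x : x * 1 = x. Proof. exact: mulr1. Qed.
Lemma add0P x : 0 + x = x. Proof. exact: add0r. Qed.
Lemma addP0 x : x + 0 = x. Proof. exact: addr0. Qed.
Lemma sub0P x : 0 - x = - x. Proof. exact: sub0r. Qed.
Lemma subP0 x : x - 0 = x. Proof. exact: subr0. Qed.

End UnitSimpl.

Hint Rewrite comp_mpoly0P comp_mpoly1P mul0P mulP0 mul1P mulP1 add0P addP0 sub0P subP0 : unit_simpl.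
Hint Rewrite comp_mpolyD comp_mpolyB comp_mpolyN comp_mpolyM comp_mpolyC comp_mpoly1 comp_mpoly0
  comp_mpolyX0 comp_mpolyX1 comp_mpolyX2 comp_mpoly_tuple3 ev_ld_comp : subst_simpl.

Section CompatibleStructure.
Variables (C : fieldType) (a c : C) (B : basis_prod C).
Hypotheses (B_wf : wf_basis_prod B) (B_ls : left_symmetric B).
Hypothesis B_compat : compatible B (W_ab a 0).
Hypothesis LLE : bLL B = (dd _ + lam _ + c%:MP, 0).
Hypothesis g2E : (bLW B).2 = dd _ + (a - 1)%:MP * lam _ + c%:MP.
Hypothesis h2E : (bWL B).2 = dd _ + lam _ + c%:MP.
Hypothesis charC0 : [pchar C] =i pred0.

Local Notation P := (P C).
Local Notation "'λ'" := ('X_0 : P).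
Local Notation "'μ'" := ('X_1 : P).
Local Notation "'∂'" := ('X_2 : P).
Local Notation c' := (c%:MP : P).
Local Notation b' := ((a - 1)%:MP : P).
Local Notation g1 := (bLW B).1.
Local Notation h1 := (bWL B).1.
Local Notation k1 := (bWW B).1.
Local Notation k2 := (bWW B).2.

(* Abstracting the [ev_ld] atoms first spares [ring] costly conversion tests between them. *)
Ltac ring_ev :=
  repeat match goal with |- context [ev_ld ?p ?x ?y] => generalize (ev_ld p x y); intro end;
  ring.

Lemma coefs_in_lam_d : [/\ in_lam_d g1, in_lam_d h1, in_lam_d k1 & in_lam_d k2].
Proof. by case: B_wf => _ [_ [? [_ [? [_ [? ?]]]]]]. Qed.

Lemma basis_prod_ev_ld : B = BasisProd (∂ + λ + c', 0) (ev_ld g1 λ ∂, ∂ + b' * λ + c')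
  (ev_ld h1 λ ∂, ∂ + λ + c') (ev_ld k1 λ ∂, ev_ld k2 λ ∂).
Proof.
have [g1_wf h1_wf k1_wf k2_wf] := coefs_in_lam_d.
move: LLE g2E h2E; rewrite /lam /dd => <- <- <-.
rewrite !in_lam_d_ev_ld //.
by case: (B) => ? [? ?] [? ?] [? ?].
Qed.

Ltac expand_identity h :=
  rewrite /inR ?inD1 ?inD0 basis_prod_ev_ld in h;
  cbv beta zeta delta [prod prod_opp esub subst3 W_ab lam mu dd] in h;
  cbn [fst snd bLL bLW bWL bWW] in h;
  autorewrite with unit_simpl in h;
  autorewrite with subst_simpl in h.

Lemma g1_skew x y : ev_ld g1 x y = ev_ld h1 (- x - y) y.
Proof.
have h := congr1 fst (B_compat 1 0 0 1); expand_identity h.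
have g1E : ev_ld g1 λ ∂ = ev_ld h1 (- λ - ∂) ∂ by apply: (eq_of_subr_eq h); ring_ev.
by move: (congr1 (comp_mpoly [tuple x; 0; y]) g1E); autorewrite with subst_simpl.
Qed.

Lemma WW_symmetric :
  ev_ld k1 λ ∂ = ev_ld k1 (- λ - ∂) ∂ /\ ev_ld k2 λ ∂ = ev_ld k2 (- λ - ∂) ∂.
Proof.
have h := B_compat 0 1 0 1; expand_identity h.
move: (congr1 fst h) (congr1 snd h) => /= k1E k2E.
by split; [apply: (eq_of_subr_eq k1E) | apply: (eq_of_subr_eq k2E)]; ring_ev.
Qed.

Lemma k1_sym x y : ev_ld k1 x y = ev_ld k1 (- x - y) y.
Proof. exact: ev_ld_symmetric (proj1 WW_symmetric) x y. Qed.

Lemma k2_sym x y : ev_ld k2 x y = ev_ld k2 (- x - y) y.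
Proof. exact: ev_ld_symmetric (proj2 WW_symmetric) x y. Qed.

Lemma ls_LWW_W :
  ev_ld g1 λ (∂ + μ) * (∂ + μ + c') + (b' * λ - μ) * ev_ld k2 (λ + μ) ∂
  - ev_ld k2 μ (∂ + λ) * (∂ + b' * λ + c') + (∂ + μ + b' * λ + c') * ev_ld k2 μ ∂ = 0.
Proof.
have h := congr1 snd (B_ls 1 0 0 1 0 1); expand_identity h.
have h1E : ev_ld h1 μ (- (λ + μ)) = ev_ld g1 λ (- (λ + μ)).
  by rewrite g1_skew; apply: ev_ld_congr; ring.
by rewrite h1E in h; apply: (eq_of_subr_eq h); ring_ev.
Qed.

Lemma ls_WWW_W :
  ev_ld k1 λ (- (λ + μ)) * (∂ + b' * (λ + μ) + c') + ev_ld k2 λ (- (λ + μ)) * ev_ld k2 (λ + μ) ∂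
  - (ev_ld k1 μ (∂ + λ) * (∂ + λ + c') + ev_ld k2 μ (∂ + λ) * ev_ld k2 λ ∂)
  - (ev_ld k1 μ (- (λ + μ)) * (∂ + b' * (λ + μ) + c')
     + ev_ld k2 μ (- (λ + μ)) * ev_ld k2 (λ + μ) ∂
     - (ev_ld k1 λ (∂ + μ) * (∂ + μ + c') + ev_ld k2 λ (∂ + μ) * ev_ld k2 μ ∂)) = 0.
Proof.
have h := congr1 snd (B_ls 0 1 0 1 0 1); expand_identity h.
by apply: (eq_of_subr_eq h); ring_ev.
Qed.

Lemma k2_shift_identity :
  (b' * (c' - λ) + c' + ∂) * (ev_ld k2 λ ∂ - ev_ld k2 λ (∂ + (c' - λ)))
  + b' * (c' - λ) * ev_ld k2 c' ∂ = 0.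
Proof.
have h := congr1 (comp_mpoly [tuple c' - λ; - c' - ∂; ∂]) ls_LWW_W.
autorewrite with subst_simpl unit_simpl in h.
have e1 : ev_ld k2 (c' - λ + (- c' - ∂)) ∂ = ev_ld k2 λ ∂.
  by rewrite k2_sym; apply: ev_ld_congr; ring.
have e2 : ev_ld k2 (- c' - ∂) (∂ + (c' - λ)) = ev_ld k2 λ (∂ + (c' - λ)).
  by rewrite k2_sym; apply: ev_ld_congr; ring.
have e3 : ev_ld k2 (- c' - ∂) ∂ = ev_ld k2 c' ∂.
  by rewrite k2_sym; apply: ev_ld_congr; ring.
by rewrite e1 e2 e3 in h; apply: (eq_of_subr_eq h); ring_ev.
Qed.

Lemma c_sub_lam_neq0 : c' - λ != 0.
Proof.
apply: (@mpoly_neq0_comp1 _ _ [tuple c' - 1; 0; 0]).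
by autorewrite with subst_simpl; ring.
Qed.

Lemma k2_c_eq0 : a != 1 -> ev_ld k2 c' ∂ = 0.
Proof.
move=> a_neq1; have b_neq0 : b' != 0 by rewrite mpolyC_eq0 subr_eq0.
have h := congr1 (comp_mpoly [tuple λ; μ; - c' - b' * (c' - λ)]) k2_shift_identity.
autorewrite with subst_simpl unit_simpl in h.
have /eqP : b' * (c' - λ) * ev_ld k2 c' (- c' - b' * (c' - λ)) = 0.
  by apply: (eq_of_subr_eq h); ring_ev.
rewrite !mulf_eq0 (negbTE b_neq0) (negbTE c_sub_lam_neq0) /= => /eqP k2E.
(* Invert the affine substitution λ ↦ -c - b(c-λ). *)
pose b_inv : P := (a - 1)^-1%:MP.
have bK : b' * b_inv = 1 by rewrite -mpolyCM mulfV ?subr_eq0.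
have := congr1 (comp_mpoly [tuple c' + (∂ + c') * b_inv; μ; ∂]) k2E.
autorewrite with subst_simpl unit_simpl.
suff -> : - c' - b' * (c' - (c' + (∂ + c') * b_inv)) = ∂ by [].
transitivity (- c' + b' * b_inv * (∂ + c')); first by ring.
by rewrite bK; ring.
Qed.

Lemma k2_shift_invariant : ev_ld k2 λ ∂ = ev_ld k2 λ (∂ + (c' - λ)).
Proof.
have factor_neq0 : b' * (c' - λ) + c' + ∂ != 0.
  apply: (@mpoly_neq0_comp1 _ _ [tuple c'; 0; 1 - c']).
  by autorewrite with subst_simpl; ring.
have : b' * (c' - λ) * ev_ld k2 c' ∂ = 0.
  have [->|/k2_c_eq0 ->] := eqVneq a 1; last by rewrite mulr0.
  by rewrite subrr !mul0r.
move: k2_shift_identity => /[swap] ->; rewrite addr0 => /eqP.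
by rewrite mulf_eq0 (negbTE factor_neq0) subr_eq0 => /eqP.
Qed.

Lemma k2_const : k2 = (k2.@[fun _ => 0])%:MP.
Proof.
have [_ _ _ k2_wf] := coefs_in_lam_d.
have k2_indep_d : ev_ld k2 λ 0 = k2.
  have shifted : k2 \mPo [tuple λ; μ; ∂ + (c' - λ)] = k2.
    by rewrite (in_lam_d_comp _ _ _ k2_wf) -k2_shift_invariant in_lam_d_ev_ld.
  by rewrite -(in_lam_d_comp _ μ _ k2_wf) (shift_invariant_indep_d charC0 shifted).
have k2_indep x y : ev_ld k2 x y = ev_ld k2 x 0.
  by rewrite -{1}k2_indep_d ev_ldE ev_ld_comp; autorewrite with subst_simpl.
have : ev_ld k2 λ 0 = ev_ld k2 (- λ - ∂) 0.
  by rewrite k2_indep_d -(k2_indep _ ∂) -k2_sym in_lam_d_ev_ld.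
move/(congr1 (comp_mpoly [tuple 0; 0; - λ])).
autorewrite with subst_simpl unit_simpl.
by rewrite oppr0 sub0r opprK k2_indep_d ev_ld00 => /esym.
Qed.

Lemma k2_const_mul : (a - 1) * k2.@[fun _ => 0] = 0.
Proof.
have [->|/k2_c_eq0] := eqVneq a 1; first by rewrite subrr mul0r.
by rewrite {1}k2_const ev_ldC => /eqP; rewrite mpolyC_eq0 => /eqP ->; rewrite mulr0.
Qed.

Lemma g1_eq0 : g1 = 0.
Proof.
have [g1_wf _ _ _] := coefs_in_lam_d.
have := congr1 (comp_mpoly [tuple λ; 0; ∂]) ls_LWW_W.
rewrite k2_const !ev_ldC; autorewrite with subst_simpl unit_simpl.
rewrite in_lam_d_ev_ld // => h.
have bk : b' * (k2.@[fun _ => 0])%:MP = 0 by rewrite -mpolyCM k2_const_mul mpolyC0.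
have /eqP : g1 * (∂ + c') = 0.
  apply: (eq_of_subr_eq h).
  transitivity (g1 * (∂ + c') - 0 + b' * (k2.@[fun _ => 0])%:MP * λ).
    by rewrite bk mul0r addr0.
  by ring_ev.
have d_c_neq0 : ∂ + c' != 0.
  apply: (@mpoly_neq0_comp1 _ _ [tuple 0; 0; 1 - c']).
  by autorewrite with subst_simpl; ring.
by rewrite mulf_eq0 (negbTE d_c_neq0) orbF => /eqP.
Qed.

Lemma h1_eq0 : h1 = 0.
Proof.
have [_ h1_wf _ _] := coefs_in_lam_d.
have := g1_skew (- λ - ∂) ∂.
have -> : - (- λ - ∂) - ∂ = λ by ring.
by rewrite g1_eq0 ev_ld0 in_lam_d_ev_ld.
Qed.

Lemma k1_eq0 : k1 = 0.
Proof.
have [_ _ k1_wf _] := coefs_in_lam_d.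
have h := ls_WWW_W.
have k1E : ev_ld k1 λ (- (λ + μ)) = ev_ld k1 μ (- (λ + μ)).
  by rewrite k1_sym; apply: ev_ld_congr; ring.
rewrite k2_const !ev_ldC k1E in h.
have {}h : ev_ld k1 λ (∂ + μ) * (∂ + μ + c') - ev_ld k1 μ (∂ + λ) * (∂ + λ + c') = 0.
  by apply: (eq_of_subr_eq h); ring_ev.
move: (congr1 (comp_mpoly [tuple λ; - c' - ∂; ∂]) h).
autorewrite with subst_simpl unit_simpl => {}h.
have /esym/eqP : 0 = ev_ld k1 (- c' - ∂) (∂ + λ) * (∂ + λ + c').
  by apply: (eq_of_subr_eq h); ring_ev.
have d_l_c_neq0 : ∂ + λ + c' != 0.
  apply: (@mpoly_neq0_comp1 _ _ [tuple 0; 0; 1 - c']).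
  by autorewrite with subst_simpl; ring.
rewrite mulf_eq0 (negbTE d_l_c_neq0) orbF => /eqP.
move/(congr1 (comp_mpoly [tuple ∂ + c' + λ; μ; - c' - λ])).
autorewrite with subst_simpl unit_simpl.
have -> : - c' - (- c' - λ) = λ by ring.
have -> : - c' - λ + (∂ + c' + λ) = ∂ by ring.
by rewrite in_lam_d_ev_ld.
Qed.

End CompatibleStructure.

Local Open Scope complex_scope.

Theorem lemma3p6 (R : realType) (a c : R[i]) (B : basis_prod R[i]) :
  wf_basis_prod B ->
  left_symmetric B ->
  compatible B (W_ab a 0) ->
  (* C[d]L is a left-symmetric conformal subalgebra, with L_l L = (d+l+c)L *)
  (bLL B).2 = 0 ->
  bLL B = (dd _ + lam _ + c%:MP, 0) ->
  (* g2 = d + (a-1) l + c  and  h2 = d + l + c *)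
  (bLW B).2 = dd _ + (a - 1)%:MP * lam _ + c%:MP ->
  (bWL B).2 = dd _ + lam _ + c%:MP ->
  ((bWL B).1 = 0 /\ (bLW B).1 = 0 /\ (bWW B).1 = 0 /\ (bWW B).2 = 0)
  \/
  (a = 1 /\ (bWL B).1 = 0 /\ (bLW B).1 = 0 /\ (bWW B).1 = 0 /\
   exists k : R[i], k != 0 /\ (bWW B).2 = k%:MP).
Proof.
move=> B_wf B_ls B_compat _ LLE g2E h2E.
have charC0 : [pchar R[i]] =i pred0 := pchar_num _.
have g1E := g1_eq0 B_wf B_ls B_compat LLE g2E h2E charC0.
have h1E := h1_eq0 B_wf B_ls B_compat LLE g2E h2E charC0.
have k1E := k1_eq0 B_wf B_ls B_compat LLE g2E h2E charC0.
have k2E := k2_const B_wf B_ls B_compat LLE g2E h2E charC0.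
have := k2_const_mul B_wf B_ls B_compat LLE g2E h2E charC0.
set k := _.@[_] in k2E * => /eqP; rewrite mulf_eq0 subr_eq0.
have [k0|k_neq0] := eqVneq k 0; first by rewrite k2E k0 mpolyC0; left.
by rewrite orbF => /eqP a1; right; do ![split=> //]; exists k.
Qed.
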